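(* Let $0<r<s<\infty$, $\alpha>0$, $\beta>0$, and for $n\ge3$ let $h_*=h_*(n)>0$ be defined by $\frac{2\alpha}{h_*^r}+\frac{2\beta}{h_*^s}=\log n-(\log\log n)^2$. Let $h_n>0$ with $h_n\to0$ satisfy $$b\log h_n+\frac{2\alpha}{h_n^r}+\frac{2\beta}{h_n^s}=\log n+C(1+o(1)),\quad n\to\infty,$$ for some $b\in\mathbb{R}$, $C\in\mathbb{R}$. Then, as $n\to\infty$: $h_*(n)=(\log n/(2\beta))^{-1/s}(1+o(1))$; for every $a\in\mathbb{R}$, $$h_n^a\exp\Big(-\frac{2\alpha}{h_n^r}\Big)=h_*^a\exp\Big(-\frac{2\alpha}{h_*^r}\Big)(1+o(1))\quad\text{and}\quad\frac{h_*^a}{n}\exp\Big(\frac{2\beta}{h_*^s}\Big)=o\Big(\exp\Big(-\frac{2\alpha}{h_*^r}\Big)\Big);$$ and for every $\gamma\in\mathbb{R}$, for $n$ large enough, $$h_*^{s+2\gamma-1}\exp\Big(\frac{2\beta}{h_*^s}\Big)\le h_n^{s+2\gamma-1}\exp\Big(\frac{2\beta}{h_n^s}\Big).$$ *)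

From Stdlib Require Export Reals.
Open Scope R_scope.

Definition eventually (P : nat -> Prop) : Prop :=
  exists N : nat, forall n : nat, (N <= n)%nat -> P n.

Definition asymp_one (f g : nat -> R) : Prop :=
  exists eps : nat -> R, Un_cv eps 0 /\
    eventually (fun n => f n = g n * (1 + eps n)).

Definition littleo (f g : nat -> R) : Prop :=
  forall e : R, 0 < e -> eventually (fun n => Rabs (f n) <= e * Rabs (g n)).

From Stdlib Require Import Reals Lra Lia Psatz ZArith.
Open Scope R_scope.

(* Put L = ln n, LL = ln L, T = -ln h_* and t = -ln h_n.  The equation of h_*
   reads 2 alpha e^(rT) + 2 beta e^(sT) = L - LL^2.  As 2 beta e^(sT) <= L and
   r < s, the first term is O(L^(r/s)) = o(L), so 2 beta e^(sT) ~ L, i.e.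
   sT = LL - ln(2 beta) + o(1): this is the asymptotics of h_*.  Subtracting the
   equation of h_n (after checking st <= LL + O(1)), the increase of
   F(x) = 2 alpha e^(rx) + 2 beta e^(sx) from T to t is LL^2 + O(LL), hence lies in
   (0, 2 LL^2].  Convexity of F gives F(t) - F(T) >= s (t - T) 2 beta e^(sT)
   >= s (t - T) L / 2, so 0 < t - T = O(LL^2 / L), and the increase of 2 alpha e^(rx)
   alone is O(L^(r/s - 1) LL^2) = o(1); this yields the second claim, and the same
   convexity bound yields the last one.  The third claim is exp(-aT - LL^2) -> 0,
   once n is replaced by e^L and 2 beta e^(sT) by L - LL^2 - 2 alpha e^(rT). *)

Lemma eventually_and (P Q : nat -> Prop) :
  eventually P -> eventually Q -> eventually (fun n => P n /\ Q n).
Proof.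
  intros [N1 H1] [N2 H2]; exists (N1 + N2)%nat; intros n Hn.
  split; [apply H1 | apply H2]; lia.
Qed.

Lemma eventually_mono (P Q : nat -> Prop) :
  (forall n, P n -> Q n) -> eventually P -> eventually Q.
Proof. intros PQ [N HN]; exists N; auto. Qed.

Lemma Un_cv_eventually_near u l e :
  Un_cv u l -> 0 < e -> eventually (fun n => Rabs (u n - l) < e).
Proof. intros Hu He; destruct (Hu e He) as [N HN]; exists N; exact HN. Qed.

Lemma Un_cv_eventually_ext u v l :
  eventually (fun n => u n = v n) -> Un_cv v l -> Un_cv u l.
Proof.
  intros [N HN] Hv e He; destruct (Hv e He) as [M HM]; exists (N + M)%nat.
  intros n Hn; rewrite HN by lia; apply HM; lia.
Qed.

Lemma Un_cv_dominated u v :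
  eventually (fun n => Rabs (u n) <= v n) -> Un_cv v 0 -> Un_cv u 0.
Proof.
  intros [N HN] Hv e He; destruct (Hv e He) as [M HM]; exists (N + M)%nat.
  intros n Hn; specialize (HN n ltac:(lia)); specialize (HM n ltac:(lia)).
  unfold R_dist in *; rewrite Rminus_0_r in *.
  apply Rabs_def2 in HM; lra.
Qed.

Lemma Un_cv_const c : Un_cv (fun _ => c) c.
Proof.
  intros e He; exists 0%nat; intros n _.
  unfold R_dist; rewrite Rminus_diag, Rabs_R0; exact He.
Qed.

Lemma Un_cv_scal0 c u : Un_cv u 0 -> Un_cv (fun n => c * u n) 0.
Proof. intro Hu; rewrite <- (Rmult_0_r c); exact (CV_mult _ _ _ _ (Un_cv_const c) Hu). Qed.

Lemma Un_cv_plus0 u v : Un_cv u 0 -> Un_cv v 0 -> Un_cv (fun n => u n + v n) 0.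
Proof. intros Hu Hv; rewrite <- (Rplus_0_r 0); exact (CV_plus _ _ _ _ Hu Hv). Qed.

Lemma Un_cv_exp0 u : Un_cv u 0 -> Un_cv (fun n => exp (u n)) 1.
Proof.
  intro Hu; rewrite <- exp_0; apply (continuity_seq exp u 0); auto.
  apply derivable_continuous_pt, derivable_pt_exp.
Qed.

Lemma Un_cv_ln1 u : Un_cv u 1 -> Un_cv (fun n => ln (u n)) 0.
Proof.
  intro Hu; rewrite <- ln_1; apply (continuity_seq ln u 1); auto.
  apply derivable_continuous_pt; exists (/ 1); apply derivable_pt_lim_ln; lra.
Qed.

Lemma asymp_one_of_ratio f g :
  (forall n, g n <> 0) -> Un_cv (fun n => f n / g n) 1 -> asymp_one f g.
Proof.
  intros Hg Hfg; exists (fun n => f n / g n - 1); split.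
  - rewrite <- (Rminus_diag 1); exact (CV_minus _ _ _ _ Hfg (Un_cv_const 1)).
  - exists 0%nat; intros n _; field; auto.
Qed.

Lemma littleo_of_factor f g w :
  eventually (fun n => f n = w n * g n) -> Un_cv w 0 -> littleo f g.
Proof.
  intros Hf Hw e He.
  apply eventually_mono with (2 := eventually_and _ _ Hf (Un_cv_eventually_near _ _ _ Hw He)).
  intros n [-> Hwn]; rewrite Rminus_0_r in Hwn; rewrite Rabs_mult.
  apply Rmult_le_compat_r; [apply Rabs_pos | lra].
Qed.

Lemma exp_le_exp x y : x <= y -> exp x <= exp y.
Proof. intros [Hxy | ->]; [left; exact (exp_increasing _ _ Hxy) | lra]. Qed.

Lemma ln_le_ln x y : 0 < x -> x <= y -> ln x <= ln y.
Proof. intros Hx [Hxy | ->]; [left; apply ln_increasing | ]; lra. Qed.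

Lemma ln_div x y : 0 < x -> 0 < y -> ln (x / y) = ln x - ln y.
Proof. intros; unfold Rdiv; rewrite ln_mult, ln_Rinv; try apply Rinv_0_lt_compat; lra. Qed.

Lemma inv_Rpower_exp c x p : c / Rpower x p = c * exp (p * - ln x).
Proof. unfold Rpower, Rdiv; rewrite <- exp_Ropp; do 2 f_equal; ring. Qed.

Lemma exp_sub1_le x : exp x - 1 <= x * exp x.
Proof.
  pose proof (exp_ineq1_le (- x)); pose proof (exp_pos x).
  assert (exp (- x) * exp x = 1) by (rewrite <- exp_plus, Rplus_opp_l; exact exp_0).
  nra.
Qed.

Lemma scaled_exp_le c k x y :
  0 <= c -> 0 <= k -> x <= y -> c * exp (k * x) <= c * exp (k * y).
Proof. intros; apply Rmult_le_compat_l, exp_le_exp; nra. Qed.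

Lemma scaled_exp_tangent c k x y : 0 <= c ->
  c * exp (k * x) * (k * (y - x)) <= c * exp (k * y) - c * exp (k * x).
Proof.
  intro Hc; replace (k * y) with (k * x + k * (y - x)) by ring; rewrite exp_plus.
  pose proof (exp_ineq1_le (k * (y - x))); pose proof (exp_pos (k * x)).
  assert (0 <= c * exp (k * x)) by nra; nra.
Qed.

Lemma scaled_exp_secant c k x y : 0 <= c ->
  c * exp (k * y) - c * exp (k * x) <= c * exp (k * x) * (k * (y - x)) * exp (k * (y - x)).
Proof.
  intro Hc; replace (k * y) with (k * x + k * (y - x)) by ring; rewrite exp_plus.
  pose proof (exp_sub1_le (k * (y - x))); pose proof (exp_pos (k * x)).
  assert (0 <= c * exp (k * x)) by nra; nra.
Qed.

Lemma pow_div_INR_le_exp (k : nat) x : 0 <= x -> (x / INR k) ^ k <= exp x.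
Proof.
  intro Hx; destruct k as [|k]; [pose proof (exp_ineq1_le x); simpl; lra|].
  assert (Hk : 0 < INR (S k)) by apply lt_0_INR, Nat.lt_0_succ.
  assert (E : exp (x / INR (S k)) ^ S k = exp x).
  { rewrite <- (exp_ln (_ ^ _)) by (apply pow_lt, exp_pos).
    rewrite ln_pow, ln_exp by apply exp_pos; f_equal; field; lra. }
  rewrite <- E; apply pow_incr; pose proof (exp_ineq1_le (x / INR (S k))).
  split; [apply Rmult_le_pos; [|left; apply Rinv_0_lt_compat]|]; lra.
Qed.

Lemma INR_cv_infty : cv_infty INR.
Proof.
  intro M; destruct (archimed M) as [HM _]; exists (Z.to_nat (up M)); intros n Hn.
  apply le_INR in Hn; destruct (Z_lt_le_dec (up M) 0) as [Hneg | Hnneg].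
  - apply IZR_lt in Hneg; pose proof (pos_INR n); lra.
  - rewrite INR_IZR_INZ, Z2Nat.id in Hn by lia; lra.
Qed.

Lemma ln_cv_infty u : cv_infty u -> cv_infty (fun n => ln (u n)).
Proof.
  intros Hu M; destruct (Hu (exp M)) as [N HN]; exists N; intros n Hn.
  rewrite <- (ln_exp M); apply ln_increasing; [apply exp_pos | auto].
Qed.

Lemma opp_ln_cv_infty u :
  eventually (fun n => 0 < u n) -> Un_cv u 0 -> cv_infty (fun n => - ln (u n)).
Proof.
  intros Hpos Hu M; apply eventually_mono with (2 := eventually_and _ _ Hpos
    (Un_cv_eventually_near _ _ _ Hu (exp_pos (- M)))).
  intros n [Hun Hnear]; rewrite Rminus_0_r, Rabs_right in Hnear by lra.
  apply ln_increasing in Hnear; [rewrite ln_exp in Hnear; lra | exact Hun].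
Qed.

Lemma sq_mul_exp_opp_cv0 q u :
  0 < q -> cv_infty u -> Un_cv (fun n => u n ^ 2 * exp (- (q * u n))) 0.
Proof.
  intros Hq Hu.
  apply Un_cv_dominated with (fun n => 27 / q ^ 3 * / u n).
  - apply eventually_mono with (2 := Hu 0); intros n Hun.
    pose proof (pow_div_INR_le_exp 3 (q * u n) ltac:(nra)) as Hcube.
    replace ((q * u n / INR 3) ^ 3) with (u n ^ 3 * q ^ 3 / 27) in Hcube by (simpl; field).
    assert (0 < q ^ 3) by (apply pow_lt; lra).
    pose proof (exp_pos (q * u n)).
    rewrite exp_Ropp, Rabs_right.
    + apply Rmult_le_reg_r with (exp (q * u n) * q ^ 3 * u n);
        [apply Rmult_lt_0_compat; nra |].
      field_simplify; [lra | split | ]; lra.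
    + apply Rle_ge, Rmult_le_pos; [nra | left; apply Rinv_0_lt_compat, exp_pos].
  - apply Un_cv_scal0, cv_infty_cv_0, Hu.
Qed.

Lemma exp_opp_cv0 q u : 0 < q -> cv_infty u -> Un_cv (fun n => exp (- (q * u n))) 0.
Proof.
  intros Hq Hu; apply Un_cv_dominated with (2 := sq_mul_exp_opp_cv0 q u Hq Hu).
  apply eventually_mono with (2 := Hu 1); intros n Hun.
  pose proof (exp_pos (- (q * u n))); rewrite Rabs_right by lra.
  rewrite <- (Rmult_1_l (exp _)) at 1; apply Rmult_le_compat_r; nra.
Qed.

Lemma eventually_linear_le_exp K k u :
  0 < k -> cv_infty u -> eventually (fun n => K * u n <= exp (k * u n)).
Proof.
  intros Hk Hu; apply eventually_mono with (2 := Hu (4 * Rabs K / k ^ 2 + 1)).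
  intros n Hun; pose proof (pow_div_INR_le_exp 2 (k * u n)) as Hsq; simpl INR in Hsq.
  assert (0 <= 4 * Rabs K / k ^ 2).
  { apply Rmult_le_pos; [pose proof (Rabs_pos K) | left; apply Rinv_0_lt_compat]; nra. }
  assert (4 * Rabs K <= k ^ 2 * u n).
  { apply Rmult_lt_compat_l with (r := k ^ 2) in Hun; [| nra].
    replace (k ^ 2 * (4 * Rabs K / k ^ 2 + 1)) with (4 * Rabs K + k ^ 2) in Hun
      by (field; lra).
    nra. }
  pose proof (Rle_abs K); assert (K * u n <= Rabs K * u n) by nra.
  apply Rle_trans with ((k * u n / 2) ^ 2); [nra | apply Hsq; nra].
Qed.

Lemma Rabs_bounds x : - Rabs x <= x <= Rabs x.
Proof. unfold Rabs; destruct (Rcase_abs x); lra. Qed.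

Lemma eventually_linear_le_sq K1 K2 u :
  cv_infty u -> eventually (fun n => K1 * u n + K2 <= u n ^ 2 - u n).
Proof.
  intro Hu; apply eventually_mono with (2 := Hu (Rabs K1 + Rabs K2 + 1)); intros n Hun.
  pose proof (Rabs_bounds K1); pose proof (Rabs_bounds K2).
  pose proof (Rabs_pos K1); pose proof (Rabs_pos K2); nra.
Qed.

Lemma mul_one_plus_small_bounds c e :
  Rabs e < 1 -> - (2 * Rabs c) <= c * (1 + e) <= 2 * Rabs c.
Proof.
  intro He; apply Rabs_def2 in He; pose proof (Rabs_bounds c).
  split; destruct (Rle_dec 0 c); nra.
Qed.

Section BandwidthAsymptotics.

Variables (r s alpha beta b C : R) (hs h eps : nat -> R).
Hypothesis r_pos : 0 < r.
Hypothesis r_lt_s : r < s.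
Hypothesis alpha_pos : 0 < alpha.
Hypothesis beta_pos : 0 < beta.
Hypothesis hs_def : forall n : nat, (3 <= n)%nat ->
  0 < hs n /\
  2 * alpha / Rpower (hs n) r + 2 * beta / Rpower (hs n) s
    = ln (INR n) - (ln (ln (INR n))) ^ 2.
Hypothesis h_pos : eventually (fun n => 0 < h n).
Hypothesis h_cv0 : Un_cv h 0.
Hypothesis eps_cv0 : Un_cv eps 0.
Hypothesis h_def : eventually (fun n =>
  b * ln (h n) + 2 * alpha / Rpower (h n) r + 2 * beta / Rpower (h n) s
    = ln (INR n) + C * (1 + eps n)).

(* 2 alpha / h^r = Fa (- ln h) and 2 beta / h^s = Fb (- ln h). *)
Let L (n : nat) : R := ln (INR n).
Let LL (n : nat) : R := ln (L n).
Let T (n : nat) : R := - ln (hs n).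
Let t (n : nat) : R := - ln (h n).
Let dT (n : nat) : R := t n - T n.
Let Fa (x : R) : R := 2 * alpha * exp (r * x).
Let Fb (x : R) : R := 2 * beta * exp (s * x).
Let gap (n : nat) : R := Fa (t n) + Fb (t n) - (Fa (T n) + Fb (T n)).

Lemma s_pos : 0 < s. Proof. lra. Qed.

Lemma Fa_pos x : 0 < Fa x.
Proof. pose proof (exp_pos (r * x)); unfold Fa; nra. Qed.

Lemma Fb_pos x : 0 < Fb x.
Proof. pose proof (exp_pos (s * x)); unfold Fb; nra. Qed.

Lemma L_cv_infty : cv_infty L.
Proof. exact (ln_cv_infty _ INR_cv_infty). Qed.

Lemma LL_cv_infty : cv_infty LL.
Proof. exact (ln_cv_infty _ L_cv_infty). Qed.

Lemma exp_LL n : 0 < L n -> exp (LL n) = L n.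
Proof. apply exp_ln. Qed.

Lemma ln_Fb x : ln (Fb x) = ln (2 * beta) + s * x.
Proof. unfold Fb; rewrite ln_mult, ln_exp; [reflexivity | lra | apply exp_pos]. Qed.

Lemma hs_pos : eventually (fun n => 0 < hs n).
Proof. exists 3%nat; intros n Hn; apply hs_def, Hn. Qed.

Lemma hs_eq : eventually (fun n => Fa (T n) + Fb (T n) = L n - LL n ^ 2).
Proof.
  exists 3%nat; intros n Hn; destruct (hs_def n Hn) as [_ Heq].
  rewrite !inv_Rpower_exp in Heq; exact Heq.
Qed.

Lemma h_eq : eventually (fun n => Fa (t n) + Fb (t n) = L n + C * (1 + eps n) + b * t n).
Proof.
  apply eventually_mono with (2 := h_def); intros n Hn.
  rewrite !inv_Rpower_exp in Hn; unfold Fa, Fb, L, t; lra.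
Qed.

Lemma Fa_T_div_L_le : eventually (fun n =>
  Fa (T n) / L n <= Fa (- (ln (2 * beta) / s)) * exp (- ((s - r) / s * LL n))).
Proof.
  apply eventually_mono with (2 := eventually_and _ _ hs_eq (L_cv_infty 0)).
  intros n [Heq HL].
  assert (HsT : ln (2 * beta) + s * T n <= LL n).
  { rewrite <- ln_Fb; apply ln_le_ln; [apply Fb_pos |].
    pose proof (Fa_pos (T n)); nra. }
  assert (Hrs : 0 < r / s) by (apply Rdiv_lt_0_compat; lra).
  rewrite <- (exp_LL n HL); unfold Fa, Rdiv.
  rewrite <- exp_Ropp, !(Rmult_assoc (2 * alpha) (exp _) (exp _)), <- !exp_plus.
  apply Rmult_le_compat_l; [lra | apply exp_le_exp].
  replace (r * T n) with (r / s * (s * T n)) by (field; lra).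
  replace (r * - (ln (2 * beta) * / s) + - ((s - r) * / s * LL n))
    with (r / s * (LL n - ln (2 * beta)) - LL n) by (field; lra).
  nra.
Qed.

Lemma LL_sq_div_L_cv0 : Un_cv (fun n => LL n ^ 2 / L n) 0.
Proof.
  apply Un_cv_eventually_ext with (2 := sq_mul_exp_opp_cv0 1 LL Rlt_0_1 LL_cv_infty).
  apply eventually_mono with (2 := L_cv_infty 0); intros n HL.
  rewrite Rmult_1_l, exp_Ropp, (exp_LL n HL); reflexivity.
Qed.

Lemma Fa_T_LL_sq_div_L_cv0 : Un_cv (fun n => Fa (T n) * LL n ^ 2 / L n) 0.
Proof.
  apply Un_cv_dominated with
    (fun n => Fa (- (ln (2 * beta) / s)) * (LL n ^ 2 * exp (- ((s - r) / s * LL n)))).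
  - apply eventually_mono with (2 := eventually_and _ _ Fa_T_div_L_le (L_cv_infty 0)).
    intros n [Hle HL].
    assert (HFa : 0 <= Fa (T n) / L n) by (apply Rlt_le, Rdiv_lt_0_compat; [apply Fa_pos | lra]).
    replace (Fa (T n) * LL n ^ 2 / L n) with (LL n ^ 2 * (Fa (T n) / L n)) by (field; lra).
    rewrite Rabs_right by (apply Rle_ge, Rmult_le_pos; [nra | exact HFa]).
    pose proof (pow2_ge_0 (LL n)); nra.
  - apply Un_cv_scal0, sq_mul_exp_opp_cv0; [apply Rdiv_lt_0_compat; lra | exact LL_cv_infty].
Qed.

Lemma Fa_T_div_L_cv0 : Un_cv (fun n => Fa (T n) / L n) 0.
Proof.
  apply Un_cv_dominated with (2 := Fa_T_LL_sq_div_L_cv0).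
  apply eventually_mono with (2 := eventually_and _ _ (L_cv_infty 0) (LL_cv_infty 1)).
  intros n [HL HLL].
  assert (HFa : 0 < Fa (T n) / L n) by (apply Rdiv_lt_0_compat; [apply Fa_pos | lra]).
  replace (Fa (T n) * LL n ^ 2 / L n) with (LL n ^ 2 * (Fa (T n) / L n)) by (field; lra).
  rewrite Rabs_right by lra; rewrite <- (Rmult_1_l (Fa (T n) / L n)) at 1.
  apply Rmult_le_compat_r; nra.
Qed.

Lemma Fb_T_div_L_cv1 : Un_cv (fun n => Fb (T n) / L n) 1.
Proof.
  pose proof (CV_minus _ _ _ _ (CV_minus _ _ _ _ (Un_cv_const 1) LL_sq_div_L_cv0)
    Fa_T_div_L_cv0) as Hcv; rewrite !Rminus_0_r in Hcv.
  apply Un_cv_eventually_ext with (2 := Hcv).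
  apply eventually_mono with (2 := eventually_and _ _ hs_eq (L_cv_infty 0)).
  intros n [Heq HL]; apply (Rmult_eq_reg_r (L n)); [| lra].
  field_simplify; lra.
Qed.

Lemma sT_eq : eventually (fun n => s * T n = LL n - ln (2 * beta) + ln (Fb (T n) / L n)).
Proof.
  apply eventually_mono with (2 := L_cv_infty 0); intros n HL.
  rewrite ln_div, ln_Fb by (apply Fb_pos || exact HL); unfold LL; ring.
Qed.

Lemma hs_asymp : asymp_one hs (fun n => Rpower (L n / (2 * beta)) (- (1 / s))).
Proof.
  apply asymp_one_of_ratio; [intro n; apply Rgt_not_eq, exp_pos |].
  apply Un_cv_eventually_ext with (fun n => exp (- (1 / s) * ln (Fb (T n) / L n))).
  - apply eventually_mono with (2 := eventually_and _ _ sT_eq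
      (eventually_and _ _ (L_cv_infty 0) hs_pos)).
    intros n [HsT [HL Hhs]]; set (D := ln (Fb (T n) / L n)) in *.
    unfold Rpower; rewrite ln_div by lra.
    rewrite <- (exp_ln (hs n)) at 1 by exact Hhs; unfold Rdiv at 1.
    rewrite <- exp_Ropp, <- exp_plus; f_equal.
    unfold T, LL in HsT; apply (Rmult_eq_reg_l s); [| lra].
    field_simplify; lra.
  - apply Un_cv_exp0, Un_cv_scal0, Un_cv_ln1, Fb_T_div_L_cv1.
Qed.

Lemma t_cv_infty : cv_infty t.
Proof. exact (opp_ln_cv_infty h h_pos h_cv0). Qed.

Lemma eps_small : eventually (fun n => Rabs (eps n) < 1).
Proof.
  apply eventually_mono with (2 := Un_cv_eventually_near _ _ _ eps_cv0 Rlt_0_1).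
  intros n Hn; rewrite Rminus_0_r in Hn; exact Hn.
Qed.

Lemma st_le : eventually (fun n => s * t n <= LL n + ln 4 - ln (2 * beta)).
Proof.
  apply eventually_mono with (2 := eventually_and _ _ h_eq (eventually_and _ _ eps_small
    (eventually_and _ _ (eventually_linear_le_exp (Rabs b / beta) s t s_pos t_cv_infty)
    (eventually_and _ _ (t_cv_infty 0) (L_cv_infty (2 * Rabs C)))))).
  intros n [Heq [Heps [Hexp [Ht HL]]]].
  (* |b| t <= Fb t / 2, so the equation of h_n gives Fb t <= 2 L + 4 |C| <= 4 L. *)
  assert (HFb : Fb (t n) <= 4 * L n).
  { pose proof (mul_one_plus_small_bounds C (eps n) Heps).
    pose proof (Rabs_bounds b); pose proof (Fa_pos (t n)).
    assert (Hbt : Rabs b * t n <= Fb (t n) / 2).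
    { unfold Fb; replace (Rabs b * t n) with (beta * (Rabs b / beta * t n)) by (field; lra).
      assert (beta * (Rabs b / beta * t n) <= beta * exp (s * t n))
        by (apply Rmult_le_compat_l; lra).
      lra. }
    nra. }
  apply ln_le_ln in HFb; [| apply Fb_pos].
  pose proof (Rabs_pos C); rewrite ln_Fb, (ln_mult 4) in HFb by lra; unfold LL; lra.
Qed.

Lemma gap_bounds : eventually (fun n => 0 < gap n <= 2 * LL n ^ 2).
Proof.
  set (K := ln 4 - ln (2 * beta)).
  apply eventually_mono with (2 := eventually_and _ _ hs_eq (eventually_and _ _ h_eq
    (eventually_and _ _ eps_small (eventually_and _ _ (t_cv_infty 0) (eventually_and _ _ st_le
    (eventually_and _ _ (LL_cv_infty 0)
    (eventually_linear_le_sq (Rabs b / s) (2 * Rabs C + Rabs b / s * K) LL LL_cv_infty))))))).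
  intros n [HsEq [HEq [Heps [Ht [Hst [HLL Hquad]]]]]].
  assert (Hgap : gap n = LL n ^ 2 + C * (1 + eps n) + b * t n) by (unfold gap; lra).
  pose proof (mul_one_plus_small_bounds C (eps n) Heps).
  assert (Hbt : Rabs b * t n <= Rabs b / s * LL n + Rabs b / s * K).
  { replace (Rabs b * t n) with (Rabs b / s * (s * t n)) by (field; lra).
    rewrite <- Rmult_plus_distr_l; apply Rmult_le_compat_l; [| unfold K; lra].
    apply Rmult_le_pos; [apply Rabs_pos | left; apply Rinv_0_lt_compat, s_pos]. }
  pose proof (Rabs_bounds b); rewrite Hgap; split; nra.
Qed.

Lemma dT_pos : eventually (fun n => 0 < dT n).
Proof.
  apply eventually_mono with (2 := gap_bounds); intros n [Hgap _].
  apply Rnot_le_lt; intro Hle; assert (HtT : t n <= T n) by (unfold dT in Hle; lra).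
  pose proof (scaled_exp_le (2 * alpha) r (t n) (T n) ltac:(lra) ltac:(lra) HtT).
  pose proof (scaled_exp_le (2 * beta) s (t n) (T n) ltac:(lra) ltac:(lra) HtT).
  unfold gap, Fa, Fb in Hgap; lra.
Qed.

Lemma Fb_T_ge : eventually (fun n => L n / 2 <= Fb (T n)).
Proof.
  apply eventually_mono with (2 := eventually_and _ _ (L_cv_infty 0)
    (Un_cv_eventually_near _ _ _ Fb_T_div_L_cv1 (ltac:(lra) : 0 < 1 / 2))).
  intros n [HL Hnear]; apply Rabs_def2 in Hnear.
  replace (Fb (T n)) with (Fb (T n) / L n * L n) by (field; lra); nra.
Qed.

Lemma gap_ge : eventually (fun n => s * dT n * (L n / 2) <= gap n).
Proof.
  apply eventually_mono with (2 := eventually_and _ _ dT_pos Fb_T_ge).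
  intros n [HdT HFb].
  pose proof (scaled_exp_tangent (2 * alpha) r (T n) (t n) ltac:(lra)
    : Fa (T n) * (r * dT n) <= Fa (t n) - Fa (T n)).
  pose proof (scaled_exp_tangent (2 * beta) s (T n) (t n) ltac:(lra)
    : Fb (T n) * (s * dT n) <= Fb (t n) - Fb (T n)).
  pose proof (Fa_pos (T n)).
  assert (s * dT n * (L n / 2) <= s * dT n * Fb (T n)) by (apply Rmult_le_compat_l; nra).
  assert (0 <= Fa (T n) * (r * dT n)) by (apply Rmult_le_pos; nra).
  unfold gap; lra.
Qed.

Lemma dT_le : eventually (fun n => dT n <= 4 / s * (LL n ^ 2 / L n)).
Proof.
  apply eventually_mono with (2 := eventually_and _ _ gap_bounds
    (eventually_and _ _ gap_ge (L_cv_infty 0))).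
  intros n [[_ Hgap] [Hge HL]].
  apply (Rmult_le_reg_l (s / 2 * L n)); [nra |].
  replace (s / 2 * L n * (4 / s * (LL n ^ 2 / L n))) with (2 * LL n ^ 2) by (field; lra).
  nra.
Qed.

Lemma dT_cv0 : Un_cv dT 0.
Proof.
  apply Un_cv_dominated with (2 := Un_cv_scal0 (4 / s) _ LL_sq_div_L_cv0).
  apply eventually_mono with (2 := eventually_and _ _ dT_pos dT_le).
  intros n [HdT Hle]; rewrite Rabs_right by lra; exact Hle.
Qed.

Lemma Fa_gap_cv0 : Un_cv (fun n => Fa (t n) - Fa (T n)) 0.
Proof.
  pose proof (CV_mult _ _ _ _ (Un_cv_exp0 _ (Un_cv_scal0 r _ dT_cv0)) Fa_T_LL_sq_div_L_cv0)
    as Hcv; rewrite Rmult_0_r in Hcv.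
  apply Un_cv_dominated with (2 := Un_cv_scal0 (4 * r / s) _ Hcv).
  apply eventually_mono with (2 := eventually_and _ _ dT_pos dT_le).
  intros n [HdT Hle].
  pose proof (scaled_exp_tangent (2 * alpha) r (T n) (t n) ltac:(lra)
    : Fa (T n) * (r * dT n) <= Fa (t n) - Fa (T n)).
  pose proof (scaled_exp_secant (2 * alpha) r (T n) (t n) ltac:(lra)
    : Fa (t n) - Fa (T n) <= Fa (T n) * (r * dT n) * exp (r * dT n)) as Hsecant.
  pose proof (Fa_pos (T n)); pose proof (exp_pos (r * dT n)).
  assert (0 <= Fa (T n) * (r * dT n)) by (apply Rmult_le_pos; nra).
  rewrite Rabs_right by lra; apply Rle_trans with (1 := Hsecant).
  replace (4 * r / s * (exp (r * dT n) * (Fa (T n) * LL n ^ 2 / L n)))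
    with (Fa (T n) * (r * (4 / s * (LL n ^ 2 / L n))) * exp (r * dT n)) by (unfold Rdiv; ring).
  apply Rmult_le_compat_r; [lra |]; apply Rmult_le_compat_l; [lra |].
  apply Rmult_le_compat_l; lra.
Qed.

Lemma h_exp_asymp a : asymp_one
  (fun n => Rpower (h n) a * exp (- (2 * alpha / Rpower (h n) r)))
  (fun n => Rpower (hs n) a * exp (- (2 * alpha / Rpower (hs n) r))).
Proof.
  apply asymp_one_of_ratio.
  { intro n; unfold Rpower; rewrite <- exp_plus; apply Rgt_not_eq, exp_pos. }
  apply Un_cv_eventually_ext with (fun n => exp (- a * dT n + -1 * (Fa (t n) - Fa (T n)))).
  - exists 0%nat; intros n _; rewrite !inv_Rpower_exp; unfold Rpower, Rdiv.
    rewrite <- !exp_plus, <- exp_Ropp, <- exp_plus; f_equal.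
    unfold dT, t, T, Fa; ring.
  - apply Un_cv_exp0, Un_cv_plus0; apply Un_cv_scal0; [exact dT_cv0 | exact Fa_gap_cv0].
Qed.

Lemma T_abs_le : eventually (fun n => Rabs (T n) <= (LL n + Rabs (ln (2 * beta)) + 1) / s).
Proof.
  apply eventually_mono with (2 := eventually_and _ _ sT_eq (eventually_and _ _ (LL_cv_infty 0)
    (Un_cv_eventually_near _ _ _ (Un_cv_ln1 _ Fb_T_div_L_cv1) Rlt_0_1))).
  intros n [HsT [HLL HD]]; rewrite Rminus_0_r in HD.
  apply (Rmult_le_reg_l s); [exact s_pos |].
  replace (s * ((LL n + Rabs (ln (2 * beta)) + 1) / s))
    with (LL n + Rabs (ln (2 * beta)) + 1) by (field; lra).
  rewrite <- (Rabs_right s) at 1 by lra; rewrite <- Rabs_mult, HsT.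
  pose proof (Rabs_bounds (ln (2 * beta))); apply Rabs_def2 in HD.
  apply Rabs_le; lra.
Qed.

Lemma hs_exp_littleo a : littleo
  (fun n => Rpower (hs n) a / INR n * exp (2 * beta / Rpower (hs n) s))
  (fun n => exp (- (2 * alpha / Rpower (hs n) r))).
Proof.
  apply littleo_of_factor with (fun n => exp (- (a * T n + LL n ^ 2))).
  - apply eventually_mono with (2 := eventually_and _ _ hs_eq (INR_cv_infty 0)).
    intros n [Heq Hn]; rewrite !inv_Rpower_exp; unfold Rpower, Rdiv.
    rewrite <- (exp_ln (INR n)) by exact Hn.
    rewrite <- !exp_Ropp, <- !exp_plus; f_equal.
    unfold Fa, Fb, T, L in *; lra.
  - apply Un_cv_dominated with (2 := exp_opp_cv0 1 LL Rlt_0_1 LL_cv_infty).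
    apply eventually_mono with (2 := eventually_and _ _ T_abs_le (eventually_and _ _
      (LL_cv_infty 0) (eventually_linear_le_sq (Rabs a / s)
        (Rabs a * (Rabs (ln (2 * beta)) + 1) / s) LL LL_cv_infty))).
    intros n [HT [HLL Hquad]].
    rewrite Rabs_right by apply Rle_ge, Rlt_le, exp_pos; apply exp_le_exp.
    assert (HaT : - (a * T n) <= Rabs a * Rabs (T n)).
    { rewrite <- Rabs_mult, <- Rabs_Ropp; apply Rle_abs. }
    assert (Rabs a * Rabs (T n) <= Rabs a / s * LL n + Rabs a * (Rabs (ln (2 * beta)) + 1) / s).
    { replace (Rabs a / s * LL n + Rabs a * (Rabs (ln (2 * beta)) + 1) / s)
        with (Rabs a * ((LL n + Rabs (ln (2 * beta)) + 1) / s)) by (field; lra).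
      apply Rmult_le_compat_l; [apply Rabs_pos | exact HT]. }
    lra.
Qed.

Lemma hs_exp_le_h_exp gamma : eventually (fun n =>
  Rpower (hs n) (s + 2 * gamma - 1) * exp (2 * beta / Rpower (hs n) s)
  <= Rpower (h n) (s + 2 * gamma - 1) * exp (2 * beta / Rpower (h n) s)).
Proof.
  set (c := s + 2 * gamma - 1).
  apply eventually_mono with (2 := eventually_and _ _ dT_pos
    (eventually_and _ _ Fb_T_ge (L_cv_infty (2 * Rabs c / s)))).
  intros n [HdT [HFb HL]].
  rewrite !inv_Rpower_exp; unfold Rpower; rewrite <- !exp_plus; apply exp_le_exp.
  change (c * ln (hs n) + Fb (T n) <= c * ln (h n) + Fb (t n)).
  pose proof (scaled_exp_tangent (2 * beta) s (T n) (t n) ltac:(lra)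
    : Fb (T n) * (s * dT n) <= Fb (t n) - Fb (T n)).
  assert (Hc : Rabs c <= s * Fb (T n)).
  { apply (Rmult_lt_compat_l s) in HL; [| exact s_pos].
    replace (s * (2 * Rabs c / s)) with (2 * Rabs c) in HL by (field; lra); nra. }
  pose proof (Rabs_bounds c).
  assert (c * dT n <= s * Fb (T n) * dT n) by nra.
  unfold dT, t, T in *; nra.
Qed.

End BandwidthAsymptotics.

Theorem lemma8 (r s alpha beta b C : R) (hs h : nat -> R) :
  0 < r -> r < s -> 0 < alpha -> 0 < beta ->
  (* h_*(n) > 0 solves the defining equation for every n >= 3 *)
  (forall n : nat, (3 <= n)%nat ->
     0 < hs n /\
     2 * alpha / Rpower (hs n) r + 2 * beta / Rpower (hs n) s
       = ln (INR n) - (ln (ln (INR n))) ^ 2) ->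
  (* h_n > 0, h_n -> 0 *)
  eventually (fun n => 0 < h n) ->
  Un_cv h 0 ->
  (* b log h_n + 2a/h_n^r + 2b/h_n^s = log n + C (1 + o(1)) *)
  (exists eps : nat -> R, Un_cv eps 0 /\
     eventually (fun n =>
       b * ln (h n) + 2 * alpha / Rpower (h n) r + 2 * beta / Rpower (h n) s
         = ln (INR n) + C * (1 + eps n))) ->
  asymp_one hs (fun n => Rpower (ln (INR n) / (2 * beta)) (- (1 / s)))
  /\ (forall a : R,
        asymp_one
          (fun n => Rpower (h n) a * exp (- (2 * alpha / Rpower (h n) r)))
          (fun n => Rpower (hs n) a * exp (- (2 * alpha / Rpower (hs n) r))))
  /\ (forall a : R,
        littleo
          (fun n => Rpower (hs n) a / INR n * exp (2 * beta / Rpower (hs n) s))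
          (fun n => exp (- (2 * alpha / Rpower (hs n) r))))
  /\ (forall gamma : R,
        eventually (fun n =>
          Rpower (hs n) (s + 2 * gamma - 1) * exp (2 * beta / Rpower (hs n) s)
          <= Rpower (h n) (s + 2 * gamma - 1) * exp (2 * beta / Rpower (h n) s))).
Proof.
  intros Hr Hrs Halpha Hbeta Hhs Hhpos Hh0 [eps [Heps Heq]].
  split; [| split; [| split]].
  - exact (hs_asymp r s alpha beta hs Hr Hrs Halpha Hbeta Hhs).
  - exact (h_exp_asymp r s alpha beta b C hs h eps Hr Hrs Halpha Hbeta Hhs Hhpos Hh0 Heps Heq).
  - exact (hs_exp_littleo r s alpha beta hs Hr Hrs Halpha Hbeta Hhs).
  - exact (hs_exp_le_h_exp r s alpha beta b C hs h eps Hr Hrs Halpha Hbeta Hhs Hhpos Hh0 Heps Heq).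
Qed.
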